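(* Let $n\geq 3$ and let $(\mathbb{R}^n,g)$ be the pseudo-Euclidean space with Cartesian coordinates $x=(x_1,\dots,x_n)$ and metric components $g_{ij}=\delta_{ij}\varepsilon_i$, $1\le i,j\le n$, where $\varepsilon_i=\pm1$. Let $\Omega\subseteq\mathbb{R}^n$ be open and let $\varphi>0$, $N>0$ and $\psi$ be smooth functions on $\Omega$. Then $(\Omega,\bar g,N,\psi)$ with $\bar g=g/\varphi^2$ is an electrostatic system if and only if $\varphi,\psi,N$ satisfy: for all $i\neq j$, $$(n-2)N\varphi_{,ij}-\varphi N_{,ij}-\varphi_{,i}N_{,j}-\varphi_{,j}N_{,i}+2\frac{\varphi}{N}\psi_{,i}\psi_{,j}=0;$$ for each $i$, $$\varphi\Big[(n-2)N\varphi_{,ii}-\varphi N_{,ii}-2\varphi_{,i}N_{,i}+2\frac{\varphi}{N}(\psi_{,i})^2\Big]+\varepsilon_i\sum_{k=1}^n\varepsilon_k\Big[\varphi\varphi_{,kk}N+\varphi\varphi_{,k}N_{,k}-(n-1)N(\varphi_{,k})^2-\frac{2}{(n-1)N}\varphi^2(\psi_{,k})^2\Big]=0;$$ $$\sum_{k=1}^n\varepsilon_k\big\{N\varphi\psi_{,kk}-(n-2)N\varphi_{,k}\psi_{,k}-\varphi\psi_{,k}N_{,k}\big\}=0;$$ $$\sum_{k=1}^n\varepsilon_k\big\{\varphi NN_{,kk}-(n-2)N\varphi_{,k}N_{,k}-\widehat C^2\varphi(\psi_{,k})^2\big\}=0,$$ where $\widehat C^2=\frac{2(n-2)}{n-1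}$.
   Context: Notation: $F_{,i}=\partial F/\partial x_i$, $F_{,ij}=\partial^2F/\partial x_i\partial x_j$. Definition (electrostatic system): Let $(M^n,h)$, $n\ge3$, be a semi-Riemannian manifold and $N:M\to\mathbb{R}_{>0}$, $\psi:M\to\mathbb{R}$ smooth. $(M,h,N,\psi)$ is an electrostatic system (static Einstein–Maxwell equations) if $\Delta N=\widehat C^2\frac{|\nabla\psi|^2}{N}$, $\operatorname{div}\big(\frac{\nabla\psi}{N}\big)=0$, and $N\operatorname{Ric}=\nabla^2N-2\frac{\nabla\psi\otimes\nabla\psi}{N}+\frac{2}{(n-1)N}|\nabla\psi|^2h$, where $\widehat C^2=\frac{2(n-2)}{n-1}$ and $\nabla,\Delta,\nabla^2,\operatorname{Ric},\operatorname{div}$ are taken with respect to $h$. *)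

From HB Require Import structures.
From mathcomp Require Import all_boot all_order all_algebra.
From mathcomp Require Import all_classical all_reals all_analysis.
Set Implicit Arguments. Unset Strict Implicit. Unset Printing Implicit Defensive.
Import Order.TTheory GRing.Theory Num.Theory.
Import numFieldNormedType.Exports.
Local Open Scope classical_set_scope.
Local Open Scope ring_scope.

Section Geometry.
Variables (R : realType) (n : nat).
Notation pt := 'rV[R]_n.

Definition coord_vec (i : 'I_n) : pt := delta_mx 0 i.
Definition pd (i : 'I_n) (f : pt -> R) : pt -> R :=
  fun x => derive f x (coord_vec i).
Definition iter_pd (l : seq 'I_n) (f : pt -> R) : pt -> R := foldr pd f l.

Definition smooth_on (Om : set pt) (f : pt -> R) : Prop :=
  forall (l : seq 'I_n) (x : pt), Om x -> differentiable (iter_pd l f) x.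

(* A (semi-Riemannian) metric on an open subset of R^n given in the
   global Cartesian chart by its component matrix G x = (g_ij(x)). *)
Variable G : pt -> 'M[R]_n.
Definition Ginv (x : pt) : 'M[R]_n := invmx (G x).

Definition christoffel (k i j : 'I_n) (x : pt) : R :=
  2^-1 * \sum_(l < n) Ginv x k l *
    (pd i (fun y => G y j l) x + pd j (fun y => G y i l) x
     - pd l (fun y => G y i j) x).

Definition ricci (i j : 'I_n) (x : pt) : R :=
  \sum_(k < n) (pd k (christoffel k i j) x - pd j (christoffel k i k) x
    + \sum_(l < n) (christoffel k k l x * christoffel l i j x
                    - christoffel k j l x * christoffel l i k x)).

Definition hessian (f : pt -> R) (i j : 'I_n) (x : pt) : R :=
  pd i (pd j f) x - \sum_(k < n) christoffel k i j x * pd k f x.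

Definition laplacian (f : pt -> R) (x : pt) : R :=
  \sum_(i < n) \sum_(j < n) Ginv x i j * hessian f i j x.

Definition grad_sq (f : pt -> R) (x : pt) : R :=
  \sum_(i < n) \sum_(j < n) Ginv x i j * pd i f x * pd j f x.

Definition grad (f : pt -> R) (k : 'I_n) (x : pt) : R :=
  \sum_(j < n) Ginv x k j * pd j f x.

Definition divergence (X : 'I_n -> pt -> R) (x : pt) : R :=
  \sum_(i < n) pd i (X i) x
  + \sum_(i < n) \sum_(k < n) christoffel i i k x * X k x.

End Geometry.

Definition Chat2 (R : realType) (n : nat) : R :=
  2 * (n%:R - 2) / (n%:R - 1).

Definition electrostatic (R : realType) (n : nat) (Om : set 'rV[R]_n)
  (G : 'rV[R]_n -> 'M[R]_n) (N psi : 'rV[R]_n -> R) : Prop :=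
  forall x, Om x ->
    [/\ laplacian G N x = Chat2 R n * grad_sq G psi x / N x,
        divergence G (fun k y => grad G psi k y / N y) x = 0 &
        forall i j : 'I_n,
          N x * ricci G i j x =
            hessian G N i j x - 2 * (pd i psi x * pd j psi x) / N x
            + 2 / ((n%:R - 1) * N x) * grad_sq G psi x * G x i j].

Definition conf_metric (R : realType) (n : nat) (eps : 'I_n -> R)
  (phi : 'rV[R]_n -> R) : 'rV[R]_n -> 'M[R]_n :=
  fun x => \matrix_(i, j) ((if i == j then eps i else 0) / phi x ^+ 2).

(* In the Cartesian chart the metric [g / phi^2] has Christoffel symbols
   [Gamma^k_ij = - (delta^k_i a_j + delta^k_j a_i - eps_i eps_k delta_ij a_k)]
   with [a = d(log phi)].  Substituting them into the Ricci tensor, the Hessian,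
   the Laplacian and the divergence turns each electrostatic equation into a
   nonzero multiple ([1/phi], [1/phi^2], [phi/N] or [phi/N^2]) of the
   corresponding equation of the statement.  The Ricci tensor also needs
   [phi_{,ij} = phi_{,ji}], which is proved from the mean value theorem applied
   to the second difference [f(x+hu+hv) - f(x+hu) - f(x+hv) + f(x)]. *)

From HB Require Import structures.
From mathcomp Require Import all_boot all_order all_algebra.
From mathcomp Require Import all_classical all_reals all_analysis.
From mathcomp Require Import ring lra.
Import Order.TTheory GRing.Theory Num.Theory.
Import numFieldNormedType.Exports.
Local Open Scope classical_set_scope.
Local Open Scope ring_scope.
Set Implicit Arguments. Unset Strict Implicit. Unset Printing Implicit Defensive.

Lemma eq_iff_factor_eq0 (R : idomainType) (a b c d : R) :
  c != 0 -> a - b = c * d -> (a = b <-> d = 0).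
Proof.
move=> c0 abE; split=> [/eqP | d0].
  by rewrite -subr_eq0 abE mulf_eq0 (negbTE c0) => /eqP.
by apply/eqP; rewrite -subr_eq0 abE d0 mulr0.
Qed.

Section Schwarz.
Variables (R : realType) (V : normedModType R).
Implicit Types (f : V -> R) (x u v w : V).

Lemma is_derive_line f u w (s : R) : derivable f (s *: u + w) u ->
  is_derive s 1 (fun t : R => f (t *: u + w)) ('D_u f (s *: u + w)).
Proof.
move=> df.
have E : (fun h : R => h^-1 *: (((fun t => f (t *: u + w)) \o shift s) (h *: 1)
                                 - f (s *: u + w)))
       = (fun h => h^-1 *: ((f \o shift (s *: u + w)) (h *: u) - f (s *: u + w))).
  by apply/funext => h /=; rewrite /shift scalerDl [h *: 1]mulr1 addrA.
by apply: DeriveDef; rewrite /derivable /derive E.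
Qed.

Lemma second_difference_mvt f x u v (h : R) : 0 < h ->
  (forall t, 0 <= t <= h ->
     derivable f (t *: u + x) u /\ derivable f (t *: u + (x + h *: v)) u) ->
  exists2 c, 0 < c < h &
    f (x + h *: u + h *: v) - f (x + h *: u) - f (x + h *: v) + f x
    = h * ('D_u f (c *: u + (x + h *: v)) - 'D_u f (c *: u + x)).
Proof.
move=> h0 Df.
pose g t := f (t *: u + (x + h *: v)) - f (t *: u + x).
have g' t : 0 <= t <= h ->
    is_derive t 1 g ('D_u f (t *: u + (x + h *: v)) - 'D_u f (t *: u + x)).
  by move=> /Df[Dx Dxv]; apply: is_deriveB; apply: is_derive_line.
have g'_in t : t \in `]0, h[ ->
    is_derive t 1 g ('D_u f (t *: u + (x + h *: v)) - 'D_u f (t *: u + x)).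
  by rewrite in_itv /= => /andP[t0 th]; apply: g'; rewrite !ltW.
have gc : {within `[0, h], continuous g}.
  apply: continuous_in_subspaceT => t; rewrite inE /= in_itv /= => /g'[dg _].
  exact/differentiable_continuous/derivable1_diffP.
have [c] := MVT h0 g'_in gc; rewrite in_itv /= => c0h.
rewrite /g /= !scale0r !add0r subr0 => gE.
exists c => //; rewrite mulrC -gE [x + h *: u]addrC.
have -> : h *: u + x + h *: v = h *: u + (x + h *: v) by rewrite addrA.
ring.
Qed.

Lemma differentiable_increment f x : differentiable f x ->
  forall e : R, 0 < e -> exists2 r : R, 0 < r & forall w1 w2, `|w1| < r -> `|w2| < r ->
    `|f (w1 + x) - f (w2 + x) - 'd f x (w1 - w2)| <= e * (`|w1| + `|w2|).
Proof.
move=> df e e0.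
have /eqaddoP/(_ e e0)/nbhs_ballP[r r0 near_x] := diff_locally df.
exists r => // w1 w2 w1r w2r.
have approx w : `|w| < r -> `|f (w + x) - (f x + 'd f x w)| <= e * `|w|.
  by move=> wr; have := near_x w; rewrite -ball_normE /= sub0r normrN => /(_ wr).
have -> : f (w1 + x) - f (w2 + x) - 'd f x (w1 - w2)
    = (f (w1 + x) - (f x + 'd f x w1)) - (f (w2 + x) - (f x + 'd f x w2)).
  by rewrite linearB /=; ring.
by rewrite mulrDr; apply: le_trans (ler_normB _ _) _; apply: lerD; apply: approx.
Qed.

Lemma normr_segment_le u v (h t s : R) : 0 <= t <= h -> 0 <= s <= h ->
  `|t *: u + s *: v| <= h * (`|u| + `|v|).
Proof.
move=> /andP[t0 th] /andP[s0 sh]; apply: le_trans (ler_normD _ _) _.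
rewrite !normrZ (ger0_norm t0) (ger0_norm s0) mulrDr.
by apply: lerD; apply: ler_wpM2r.
Qed.

Lemma second_difference_approx f x u v :
  (\forall y \near x, derivable f y u) -> differentiable (fun y => 'D_u f y) x ->
  forall e : R, 0 < e -> exists2 r : R, 0 < r & forall h : R, 0 < h -> h < r ->
    `|f (x + h *: u + h *: v) - f (x + h *: u) - f (x + h *: v) + f x
      - h ^+ 2 * 'D_v (fun y => 'D_u f y) x| <= e * h ^+ 2.
Proof.
move=> /nbhs_ballP[r1 r10 Df] dDf e e0.
set L := `|u| + `|v|; have L0 : 0 <= L by rewrite addr_ge0.
have K0 : 0 < 2 * L + 1 by lra.
have [r2 r20 incr] := differentiable_increment dDf (divr_gt0 e0 K0).
exists (Num.min r1 r2 / (2 * L + 1)) => [|h h0].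
  by rewrite divr_gt0 ?lt_min ?r10 ?r20.
rewrite ltr_pdivlMr // lt_min => /andP[hr1 hr2].
have hL w : `|w| <= h * L -> `|w| < h * (2 * L + 1).
  by move=> wh; apply: le_lt_trans wh _; rewrite (ltr_pM2l h0); lra.
have Df_at w : `|w| <= h * L -> derivable f (w + x) u.
  move=> /hL wh; apply: Df; rewrite -ball_normE /= opprD addrCA subrr addr0 normrN.
  exact: lt_trans hr1.
have h00 : (0 : R) <= 0 <= h by rewrite lexx ltW.
have hh : 0 <= h <= h by rewrite lexx ltW.
have Df_seg t : 0 <= t <= h ->
    derivable f (t *: u + x) u /\ derivable f (t *: u + (x + h *: v)) u.
  move=> ht; split.
    by have := Df_at _ (normr_segment_le u v ht h00); rewrite scale0r addr0.
  by rewrite addrCA addrC; apply/Df_at/(normr_segment_le _ _ ht hh).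
have [c /andP[c0 ch] ->] := second_difference_mvt h0 Df_seg.
set w1 := c *: u + h *: v; set w2 := c *: u.
have -> : c *: u + (x + h *: v) = w1 + x by rewrite addrCA addrC.
have hc : 0 <= c <= h by rewrite !ltW.
have nw1 : `|w1| <= h * L by apply: normr_segment_le.
have nw2 : `|w2| <= h * L by have := normr_segment_le u v hc h00; rewrite scale0r addr0.
have -> : h * ('D_u f (w1 + x) - 'D_u f (w2 + x)) - h ^+ 2 * 'D_v ('D_u f) x
    = h * ('D_u f (w1 + x) - 'D_u f (w2 + x) - 'd ('D_u f) x (w1 - w2)).
  have w12 : w1 - w2 = h *: v by rewrite /w1 /w2 addrAC subrr add0r.
  have dZ : 'd ('D_u f) x (h *: v) = h * 'd ('D_u f) x v by rewrite linearZ.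
  by rewrite (deriveE v dDf) w12 dZ; ring.
rewrite normrM gtr0_norm // expr2 mulrCA ler_pM2l //.
apply: le_trans (incr _ _ (lt_trans (hL _ nw1) hr2) (lt_trans (hL _ nw2) hr2)) _.
have -> : e * h = e / (2 * L + 1) * (h * (2 * L + 1)) by field; lra.
by rewrite ler_wpM2l ?divr_ge0 ?ltW //; nra.
Qed.

Lemma eq_of_sq_approx (A B : R) :
  (forall e, 0 < e -> exists2 h, 0 < h & exists D,
     `|D - h ^+ 2 * A| <= e * h ^+ 2 /\ `|D - h ^+ 2 * B| <= e * h ^+ 2) -> A = B.
Proof.
move=> approx; apply/eqP; apply: contraT => AB.
have dAB : 0 < `|A - B| by rewrite normr_gt0 subr_eq0.
have [h h0 [D [DA DB]]] := approx (`|A - B| / 4) (divr_gt0 dAB (ltr0n _ 4)).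
have : h ^+ 2 * `|A - B| <= h ^+ 2 * (`|A - B| / 2).
  rewrite -(ger0_norm (sqr_ge0 h)) -normrM mulrBr.
  have -> : h ^+ 2 * A - h ^+ 2 * B = (D - h ^+ 2 * B) - (D - h ^+ 2 * A) by ring.
  apply: le_trans (ler_normB _ _) _.
  by rewrite ger0_norm ?sqr_ge0 //; move: (lerD DB DA); lra.
by rewrite ler_pM2l ?exprn_gt0 //; lra.
Qed.

Lemma schwarz f x u v :
  (\forall y \near x, derivable f y u) -> (\forall y \near x, derivable f y v) ->
  differentiable (fun y => 'D_u f y) x -> differentiable (fun y => 'D_v f y) x ->
  'D_v (fun y => 'D_u f y) x = 'D_u (fun y => 'D_v f y) x.
Proof.
move=> Du Dv dDu dDv; apply: eq_of_sq_approx => e e0.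
have [r1 r10 approx_uv] := second_difference_approx v Du dDu e0.
have [r2 r20 approx_vu] := second_difference_approx u Dv dDv e0.
set h := Num.min r1 r2 / 2.
have m0 : 0 < Num.min r1 r2 by rewrite lt_min r10 r20.
have [m1 m2] : Num.min r1 r2 <= r1 /\ Num.min r1 r2 <= r2.
  by rewrite !ge_min !lexx orbT.
have h0 : 0 < h by rewrite /h; lra.
exists h => //.
exists (f (x + h *: u + h *: v) - f (x + h *: u) - f (x + h *: v) + f x).
split; first by apply: approx_uv => //; rewrite /h; lra.
have := approx_vu h h0 ltac:(rewrite /h; lra).
by rewrite (addrAC x (h *: v)) -[_ - f (x + h *: v) - _]addrAC.
Qed.

End Schwarz.

Section ConformalChristoffel.
Variables (R : realType) (n : nat) (eps : 'I_n -> R).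
Hypothesis eps_sign : forall i, eps i = 1 \/ eps i = -1.

Definition kdelta (i j : 'I_n) : R := (i == j)%:R.

Lemma kdelta_id i : kdelta i i = 1. Proof. by rewrite /kdelta eqxx. Qed.

Lemma kdelta_neq i j : i != j -> kdelta i j = 0 /\ kdelta j i = 0.
Proof. by move=> ij; rewrite /kdelta (negbTE ij) eq_sym (negbTE ij). Qed.

Lemma sum_kdelta_l m (F : 'I_n -> R) : \sum_(k < n) kdelta k m * F k = F m.
Proof.
rewrite (bigD1 m) //= kdelta_id mul1r big1 ?addr0 // => k /kdelta_neq[-> _].
exact: mul0r.
Qed.

Lemma sum_kdelta_r m (F : 'I_n -> R) : \sum_(k < n) kdelta m k * F k = F m.
Proof.
by rewrite -(sum_kdelta_l m); apply: eq_bigr => k _; rewrite /kdelta eq_sym.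
Qed.

Lemma sumr_const_ord (c : R) : \sum_(k < n) c = n%:R * c.
Proof. by rewrite sumr_const card_ord mulr_natl. Qed.

(* With [a = d(log phi)], these are the Christoffel symbols [Gamma^k_ij] of the
   metric [eps_i delta_ij / phi^2]. *)
Definition conf_christoffel (a : 'I_n -> R) (k i j : 'I_n) : R :=
  - (kdelta k i * a j + kdelta k j * a i - kdelta i j * eps i * eps k * a k).

Arguments conf_christoffel : simpl never.

Lemma sum_conf_christoffel_mulr a i j (X : 'I_n -> R) :
  \sum_(k < n) conf_christoffel a k i j * X k =
  - (X i * a j + X j * a i - kdelta i j * eps i * \sum_(k < n) eps k * a k * X k).
Proof.
have E k : conf_christoffel a k i j * X k = - (kdelta k i * (a j * X k))
    - kdelta k j * (a i * X k) + kdelta i j * eps i * (eps k * a k * X k).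
  by rewrite /conf_christoffel; ring.
rewrite (eq_bigr _ (fun k _ => E k)) !big_split /= !sumrN -!mulr_sumr.
by rewrite !sum_kdelta_l; ring.
Qed.

Lemma sum_mul_conf_christoffel a k j (Y : 'I_n -> R) :
  \sum_(l < n) Y l * conf_christoffel a k j l =
  - (kdelta k j * \sum_(l < n) Y l * a l + Y k * a j - eps j * eps k * a k * Y j).
Proof.
have E l : Y l * conf_christoffel a k j l = - (kdelta k j * (Y l * a l))
    - kdelta k l * (Y l * a j) + kdelta j l * (eps j * eps k * a k * Y l).
  by rewrite /conf_christoffel; ring.
rewrite (eq_bigr _ (fun l _ => E l)) !big_split /= !sumrN -!mulr_sumr.
by rewrite !sum_kdelta_r; ring.
Qed.

Lemma conf_christoffel_id a k l : conf_christoffel a k k l = - a l.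
Proof. by rewrite /conf_christoffel kdelta_id; case: (eps_sign k) => ->; ring. Qed.

Lemma sum_conf_christoffel_trace a j :
  \sum_(k < n) conf_christoffel a k j k = - (n%:R * a j).
Proof.
have E k : conf_christoffel a k j k = - (kdelta k j * a k) - a j
    + kdelta j k * (eps j * eps k * a k).
  by rewrite /conf_christoffel kdelta_id; ring.
rewrite (eq_bigr _ (fun k _ => E k)) !big_split /= !sumrN.
rewrite sum_kdelta_l sum_kdelta_r sumr_const_ord.
by case: (eps_sign j) => ->; ring.
Qed.

Lemma sum_conf_christoffel_div (D : 'I_n -> 'I_n -> R) i j :
  \sum_(k < n) conf_christoffel (D k) k i j =
  - (D i j + D j i - kdelta i j * eps i * \sum_(k < n) eps k * D k k).
Proof.
have E k : conf_christoffel (D k) k i j = - (kdelta k i * D k j)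
    - kdelta k j * D k i + kdelta i j * eps i * (eps k * D k k).
  by rewrite /conf_christoffel; ring.
rewrite (eq_bigr _ (fun k _ => E k)) !big_split /= !sumrN -!mulr_sumr.
by rewrite (sum_kdelta_l i (fun k => D k j)) (sum_kdelta_l j (fun k => D k i)); ring.
Qed.

(* The Ricci tensor of [conf_christoffel a] when [D m c] stands for
   [d_m a_c]; the symmetry [D i j = D j i] is not assumed here. *)
Lemma conf_ricci_formula a (D : 'I_n -> 'I_n -> R) i j :
  \sum_(k < n) (conf_christoffel (D k) k i j - conf_christoffel (D j) k i k
    + \sum_(l < n) (conf_christoffel a k k l * conf_christoffel a l i j
                    - conf_christoffel a k j l * conf_christoffel a l i k))
  = - D i j + (n%:R - 1) * D j i + kdelta i j * eps i * \sum_(k < n) eps k * D k k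
    + (n%:R - 2) * a i * a j
    - (n%:R - 2) * kdelta i j * eps i * \sum_(k < n) eps k * a k ^+ 2.
Proof.
set S := \sum_(k < n) eps k * a k ^+ 2.
have S_sq : \sum_(k < n) eps k * a k * a k = S by apply: eq_bigr => k _; ring.
have quad_upper :
    \sum_(k < n) \sum_(l < n) conf_christoffel a k k l * conf_christoffel a l i j
    = n%:R * (a i * a j + a j * a i - kdelta i j * eps i * S).
  under eq_bigr => k _ do under eq_bigr => l _ do
    rewrite conf_christoffel_id mulNr mulrC.
  rewrite sumr_const_ord; congr (_ * _).
  by rewrite sumrN sum_conf_christoffel_mulr S_sq opprK.
have quad_lower k : \sum_(l < n) conf_christoffel a k j l * conf_christoffel a l i k =
    - (conf_christoffel a k j i * a k) - a i * conf_christoffel a k j k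
    - eps i * S * (kdelta i k * kdelta k j).
  under eq_bigr => l _ do rewrite mulrC.
  rewrite sum_conf_christoffel_mulr sum_mul_conf_christoffel S_sq.
  by case: (eps_sign j) => ->; ring.
rewrite !big_split /= sum_conf_christoffel_div sumrN sum_conf_christoffel_trace.
under eq_bigr => k _ do rewrite sumrB.
rewrite big_split /= sumrN quad_upper (eq_bigr _ (fun k _ => quad_lower k)).
rewrite !big_split /= !sumrN -!mulr_sumr.
under eq_bigr => k _ do rewrite mulrC.
rewrite sum_conf_christoffel_mulr sum_conf_christoffel_trace S_sq.
rewrite (sum_kdelta_r i (fun k => kdelta k j)).
by case: (eqVneq i j) => [<-|/kdelta_neq[-> ->]]; rewrite ?kdelta_id; ring.
Qed.

End ConformalChristoffel.

Arguments kdelta {R n}.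
Arguments kdelta_id {R n}.
Arguments kdelta_neq {R n i j}.
Arguments sumr_const_ord {R n}.

(* Forms of [deriveM], [derivableM], ... for functions written as lambda terms,
   which [rewrite] does not match against [f * g], [f^-1], ... *)
Section DeriveFun.
Variables (R : realType) (V : normedModType R).
Implicit Types (f g : V -> R) (y v : V).

Lemma deriveMl_fun (c : R) f y v : derivable f y v ->
  'D_v (fun z => c * f z) y = c * 'D_v f y.
Proof. by move=> df; have := deriveMl c df. Qed.

Lemma deriveM_fun f g y v : derivable f y v -> derivable g y v ->
  'D_v (fun z => f z * g z) y = f y * 'D_v g y + g y * 'D_v f y.
Proof. by move=> df dg; have := deriveM df dg. Qed.

Lemma deriveV_fun f y v : f y != 0 -> derivable f y v ->
  'D_v (fun z => (f z)^-1) y = - (f y) ^-2 * 'D_v f y.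
Proof. by move=> f0 df; have := deriveV f0 df. Qed.

Lemma deriveD_fun f g y v : derivable f y v -> derivable g y v ->
  'D_v (fun z => f z + g z) y = 'D_v f y + 'D_v g y.
Proof. by move=> df dg; have := deriveD df dg. Qed.

Lemma deriveB_fun f g y v : derivable f y v -> derivable g y v ->
  'D_v (fun z => f z - g z) y = 'D_v f y - 'D_v g y.
Proof. by move=> df dg; have := deriveB df dg. Qed.

Lemma deriveN_fun f y v : derivable f y v -> 'D_v (fun z => - f z) y = - 'D_v f y.
Proof. by move=> df; have := deriveN df. Qed.

Lemma derivableMl_fun (c : R) f y v : derivable f y v ->
  derivable (fun z => c * f z) y v.
Proof. by move=> df; have := derivableM (derivable_cst c y v) df. Qed.

Lemma derivableM_fun f g y v : derivable f y v -> derivable g y v ->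
  derivable (fun z => f z * g z) y v.
Proof. by move=> df dg; have := derivableM df dg. Qed.

Lemma derivableV_fun f y v : f y != 0 -> derivable f y v ->
  derivable (fun z => (f z)^-1) y v.
Proof. by move=> f0 df; have := derivableV f0 df. Qed.

Lemma derivableD_fun f g y v : derivable f y v -> derivable g y v ->
  derivable (fun z => f z + g z) y v.
Proof. by move=> df dg; have := derivableD df dg. Qed.

Lemma derivableB_fun f g y v : derivable f y v -> derivable g y v ->
  derivable (fun z => f z - g z) y v.
Proof. by move=> df dg; have := derivableB df dg. Qed.

End DeriveFun.

Section Smooth.
Variables (R : realType) (n : nat) (Om : set 'rV[R]_n).
Implicit Types (f : 'rV[R]_n -> R) (x v : 'rV[R]_n).

Lemma smooth_pd f m : smooth_on Om f -> smooth_on Om (pd m f).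
Proof.
by move=> sf l x Omx; have := sf (l ++ [:: m]) x Omx; rewrite /iter_pd foldr_cat.
Qed.

Lemma smooth_differentiable f x : smooth_on Om f -> Om x -> differentiable f x.
Proof. by move=> sf; exact: sf [::] x. Qed.

Lemma smooth_derivable f x v : smooth_on Om f -> Om x -> derivable f x v.
Proof. by move=> sf Omx; apply: diff_derivable; exact: smooth_differentiable. Qed.

Lemma open_near x : open Om -> Om x -> \forall y \near x, Om y.
Proof. by move=> Om_open Omx; apply: open_nbhs_nbhs; split. Qed.

Lemma pd_comm f i j x : open Om -> smooth_on Om f -> Om x ->
  pd i (pd j f) x = pd j (pd i f) x.
Proof.
move=> Om_open sf Omx; have Om_x := open_near Om_open Omx.
rewrite /pd; apply: schwarz.
- by apply: (filterS (P := Om)) => [y Omy|]; [exact: smooth_derivable sf Omy|].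
- by apply: (filterS (P := Om)) => [y Omy|]; [exact: smooth_derivable sf Omy|].
- exact: smooth_differentiable (smooth_pd _ sf) Omx.
- exact: smooth_differentiable (smooth_pd _ sf) Omx.
Qed.

End Smooth.

Section ConformalMetric.
Variables (R : realType) (n : nat) (eps : 'I_n -> R).
Hypothesis eps_sign : forall i, eps i = 1 \/ eps i = -1.
Variables (Om : set 'rV[R]_n) (phi N psi : 'rV[R]_n -> R).
Hypothesis Om_open : open Om.
Hypotheses (sphi : smooth_on Om phi) (sN : smooth_on Om N) (spsi : smooth_on Om psi).
Hypothesis phi_gt0 : forall x, Om x -> 0 < phi x.
Hypothesis N_gt0 : forall x, Om x -> 0 < N x.
Local Notation G := (conf_metric eps phi).
Local Notation Gamma := (conf_christoffel eps).
Implicit Types (x y : 'rV[R]_n).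

Lemma phi_neq0 x : Om x -> phi x != 0.
Proof. by move=> /phi_gt0/gt_eqF->. Qed.

Lemma N_neq0 x : Om x -> N x != 0.
Proof. by move=> /N_gt0/gt_eqF->. Qed.

Lemma conf_metricE y i j : G y i j = kdelta i j * eps i / phi y ^+ 2.
Proof. by rewrite /conf_metric mxE /kdelta; case: (i == j) => /=; ring. Qed.

Lemma conf_metric_inv y : phi y != 0 ->
  Ginv G y = \matrix_(i, j) (kdelta i j * eps i * phi y ^+ 2).
Proof.
move=> phiy0; set B := \matrix_(i, j) (kdelta i j * eps i * phi y ^+ 2).
have GB : G y *m B = 1%:M.
  apply/matrixP => i j; rewrite !mxE.
  rewrite (eq_bigr (fun k => kdelta i k
      * (eps i / phi y ^+ 2 * (kdelta k j * eps k * phi y ^+ 2)))); last first.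
    by move=> k _; rewrite conf_metricE !mxE; ring.
  rewrite sum_kdelta_r /kdelta; case: (i == j) => /=; last by ring.
  by case: (eps_sign i) => ->; field; rewrite ?expf_neq0.
have [G_unit _] := mulmx1_unit GB.
by rewrite /Ginv -[RHS]mul1mx -(mulVmx G_unit) -mulmxA GB mulmx1.
Qed.

Lemma pd_conf_metric y k i j : Om y ->
  pd k (fun z => G z i j) y = kdelta i j * eps i * (- 2 * pd k phi y / phi y ^+ 3).
Proof.
move=> Omy; have phiy0 := phi_neq0 Omy.
have dphi v : derivable phi y v := smooth_derivable sphi Omy.
have -> : (fun z => G z i j) = (fun z => kdelta i j * eps i * (phi z * phi z)^-1).
  by apply/funext => z; rewrite conf_metricE expr2.
have dphi2 v : derivable (fun z => phi z * phi z) y v :=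
  derivableM_fun (dphi v) (dphi v).
rewrite /pd deriveMl_fun; last by apply: derivableV_fun; rewrite ?mulf_neq0.
by rewrite deriveV_fun ?mulf_neq0 // deriveM_fun //; field.
Qed.

Definition dlog (m : 'I_n) y : R := pd m phi y / phi y.

Lemma christoffel_conf_metric y k i j : Om y ->
  christoffel G k i j y = Gamma (dlog ^~ y) k i j.
Proof.
move=> Omy; have phiy0 := phi_neq0 Omy.
set X := fun m => - 2 * pd m phi y / phi y ^+ 3.
rewrite /christoffel (conf_metric_inv phiy0).
pose F l := eps k * phi y ^+ 2 * (kdelta j l * eps j * X i
  + kdelta i l * eps i * X j - kdelta i j * eps i * X l).
rewrite (eq_bigr (fun l => kdelta k l * F l)); last first.
  by move=> l _; rewrite mxE !pd_conf_metric // /F /X; ring.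
rewrite sum_kdelta_r /F /conf_christoffel /dlog /X.
(* Locking [pd] keeps [field] from unfolding derivatives to compare atoms. *)
case: (eqVneq j k) => [->|/(@kdelta_neq R)[-> ->]];
  case: (eqVneq i k) => [->|/(@kdelta_neq R)[-> ->]];
  by rewrite ?kdelta_id [@pd _ _]lock; case: (eps_sign k) => ->; field.
Qed.

Lemma derivable_dlog m y v : Om y -> derivable (dlog m) y v.
Proof.
move=> Omy; apply: derivableM_fun; first exact: smooth_derivable (smooth_pd _ sphi) Omy.
by apply: derivableV_fun; [exact: phi_neq0 | exact: smooth_derivable sphi Omy].
Qed.

Lemma pd_dlog m c x : Om x -> pd m (dlog c) x =
  pd m (pd c phi) x / phi x - pd c phi x * pd m phi x / phi x ^+ 2.
Proof.
move=> Omx; have phix0 := phi_neq0 Omx.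
have dphi v : derivable phi x v := smooth_derivable sphi Omx.
rewrite /dlog /pd deriveM_fun; last 2 first.
- exact: smooth_derivable (smooth_pd _ sphi) Omx.
- exact: derivableV_fun.
by rewrite deriveV_fun //; field.
Qed.

Lemma pd_christoffel_conf_metric x m k i j : Om x ->
  pd m (christoffel G k i j) x = Gamma (fun c => pd m (dlog c) x) k i j.
Proof.
move=> Omx.
have E : \forall y \near x, christoffel G k i j y = - (kdelta k i * dlog j y
    + kdelta k j * dlog i y - kdelta i j * eps i * eps k * dlog k y).
  by apply: (filterS (P := Om)) => [y Omy|]; [rewrite christoffel_conf_metric|
    exact: open_near].
rewrite /pd (near_eq_derive _ E).
have d c : derivable (dlog c) x (coord_vec R m) := derivable_dlog Omx.
rewrite deriveN_fun; last by apply: derivableB_fun; [apply: derivableD_fun|];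
  apply: derivableMl_fun.
rewrite deriveB_fun; [|by apply: derivableD_fun; apply: derivableMl_fun|
  by apply: derivableMl_fun].
rewrite deriveD_fun; [|by apply: derivableMl_fun|by apply: derivableMl_fun].
by rewrite !deriveMl_fun.
Qed.

Lemma ricci_conf_metric x i j : Om x -> ricci G i j x =
  (n%:R - 2) * pd i (pd j phi) x / phi x
  + kdelta i j * eps i * ((\sum_(k < n) eps k * pd k (pd k phi) x) / phi x
     - (n%:R - 1) * (\sum_(k < n) eps k * pd k phi x ^+ 2) / phi x ^+ 2).
Proof.
move=> Omx; have phix0 := phi_neq0 Omx.
have -> : ricci G i j x = \sum_(k < n) (Gamma (fun c => pd k (dlog c) x) k i j
    - Gamma (fun c => pd j (dlog c) x) k i k
    + \sum_(l < n) (Gamma (dlog ^~ x) k k l * Gamma (dlog ^~ x) l i j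
                    - Gamma (dlog ^~ x) k j l * Gamma (dlog ^~ x) l i k)).
  rewrite /ricci; apply: eq_bigr => k _; rewrite !pd_christoffel_conf_metric //.
  by congr (_ + _); apply: eq_bigr => l _; rewrite !christoffel_conf_metric.
rewrite (conf_ricci_formula eps_sign (dlog ^~ x) (fun m c => pd m (dlog c) x)) /=.
have trace_pd_dlog : \sum_(k < n) eps k * pd k (dlog k) x =
    (\sum_(k < n) eps k * pd k (pd k phi) x) / phi x
    - (\sum_(k < n) eps k * pd k phi x ^+ 2) / phi x ^+ 2.
  rewrite !mulr_suml -sumrB; apply: eq_bigr => k _.
  by rewrite pd_dlog //; field.
have trace_dlog_sq : \sum_(k < n) eps k * dlog k x ^+ 2 =
    (\sum_(k < n) eps k * pd k phi x ^+ 2) / phi x ^+ 2.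
  by rewrite mulr_suml; apply: eq_bigr => k _; rewrite /dlog; field.
rewrite trace_pd_dlog trace_dlog_sq !pd_dlog // /dlog (pd_comm j i Om_open sphi Omx).
by field; rewrite ?phix0.
Qed.

Lemma hessian_conf_metric x i j : Om x -> hessian G N i j x =
  pd i (pd j N) x + pd i N x * dlog j x + pd j N x * dlog i x
  - kdelta i j * eps i * (\sum_(k < n) eps k * (pd k phi x * pd k N x)) / phi x.
Proof.
move=> Omx; have phix0 := phi_neq0 Omx.
rewrite /hessian (eq_bigr (fun k => Gamma (dlog ^~ x) k i j * pd k N x)); last first.
  by move=> k _; rewrite christoffel_conf_metric.
rewrite sum_conf_christoffel_mulr.
have -> : \sum_(k < n) eps k * dlog k x * pd k N x =
    (\sum_(k < n) eps k * (pd k phi x * pd k N x)) / phi x.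
  by rewrite mulr_suml; apply: eq_bigr => k _; rewrite /dlog; field.
by ring.
Qed.

Lemma laplacian_conf_metric x : Om x -> laplacian G N x =
  phi x ^+ 2 * (\sum_(k < n) eps k * pd k (pd k N) x)
  - (n%:R - 2) * phi x * (\sum_(k < n) eps k * (pd k phi x * pd k N x)).
Proof.
move=> Omx; have phix0 := phi_neq0 Omx.
rewrite /laplacian (conf_metric_inv phix0).
rewrite (eq_bigr (fun i => eps i * phi x ^+ 2 * hessian G N i i x)); last first.
  move=> i _; rewrite (eq_bigr (fun j => kdelta i j
      * (eps i * phi x ^+ 2 * hessian G N i j x))); first exact: sum_kdelta_r.
  by move=> j _; rewrite mxE; ring.
rewrite (eq_bigr (fun i => phi x ^+ 2 * (eps i * pd i (pd i N) x)
    + 2 * phi x * (eps i * (pd i phi x * pd i N x))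
    - phi x * (\sum_(k < n) eps k * (pd k phi x * pd k N x)))); last first.
  move=> i _; rewrite hessian_conf_metric // kdelta_id /dlog.
  by case: (eps_sign i) => ->; field.
by rewrite sumrB big_split /= -!mulr_sumr sumr_const_ord; ring.
Qed.

Lemma grad_sq_conf_metric x : Om x ->
  grad_sq G psi x = phi x ^+ 2 * \sum_(k < n) eps k * pd k psi x ^+ 2.
Proof.
move=> Omx; rewrite /grad_sq (conf_metric_inv (phi_neq0 Omx)) mulr_sumr.
apply: eq_bigr => i _.
rewrite (eq_bigr (fun j => kdelta i j
    * (eps i * phi x ^+ 2 * pd i psi x * pd j psi x))); last first.
  by move=> j _; rewrite mxE; ring.
by rewrite sum_kdelta_r; ring.
Qed.

Lemma grad_conf_metric y k : Om y ->
  grad G psi k y = eps k * phi y ^+ 2 * pd k psi y.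
Proof.
move=> Omy; rewrite /grad (conf_metric_inv (phi_neq0 Omy)).
rewrite (eq_bigr (fun j => kdelta k j * (eps k * phi y ^+ 2 * pd j psi y))).
  exact: sum_kdelta_r.
by move=> j _; rewrite mxE; ring.
Qed.

Lemma pd_grad_conf_metric_div x i : Om x ->
  pd i (fun y => grad G psi i y / N y) x =
  eps i * (2 * phi x * pd i phi x * pd i psi x / N x
           + phi x ^+ 2 * pd i (pd i psi) x / N x
           - phi x ^+ 2 * pd i psi x * pd i N x / N x ^+ 2).
Proof.
move=> Omx; have phix0 := phi_neq0 Omx; have Nx0 := N_neq0 Omx.
have E : \forall y \near x, grad G psi i y / N y =
    eps i * (phi y * (phi y * (pd i psi y * (N y)^-1))).
  apply: (filterS (P := Om)) => [y Omy|]; last exact: open_near.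
  by rewrite grad_conf_metric //; ring.
rewrite /pd (near_eq_derive _ E).
have dphi v : derivable phi x v := smooth_derivable sphi Omx.
have dN v : derivable N x v := smooth_derivable sN Omx.
have dpsi v : derivable (pd i psi) x v := smooth_derivable (smooth_pd _ spsi) Omx.
have dNV v : derivable (fun y => (N y)^-1) x v := derivableV_fun Nx0 (dN v).
have d3 v : derivable (fun y => pd i psi y * (N y)^-1) x v :=
  derivableM_fun (dpsi v) (dNV v).
have d2 v : derivable (fun y => phi y * (pd i psi y * (N y)^-1)) x v :=
  derivableM_fun (dphi v) (d3 v).
have d1 v : derivable (fun y => phi y * (phi y * (pd i psi y * (N y)^-1))) x v :=
  derivableM_fun (dphi v) (d2 v).
rewrite deriveMl_fun // !deriveM_fun // deriveV_fun //.
by rewrite /pd; field; rewrite ?Nx0.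
Qed.

Lemma divergence_conf_metric x : Om x ->
  divergence G (fun k y => grad G psi k y / N y) x =
  phi x / N x ^+ 2 * (N x * phi x * (\sum_(k < n) eps k * pd k (pd k psi) x)
    - (n%:R - 2) * N x * (\sum_(k < n) eps k * (pd k phi x * pd k psi x))
    - phi x * (\sum_(k < n) eps k * (pd k psi x * pd k N x))).
Proof.
move=> Omx; have phix0 := phi_neq0 Omx; have Nx0 := N_neq0 Omx.
rewrite /divergence.
rewrite (eq_bigr (fun i => 2 * phi x / N x * (eps i * (pd i phi x * pd i psi x))
    + phi x ^+ 2 / N x * (eps i * pd i (pd i psi) x)
    - phi x ^+ 2 / N x ^+ 2 * (eps i * (pd i psi x * pd i N x)))); last first.
  by move=> i _; rewrite pd_grad_conf_metric_div //; field; rewrite ?Nx0.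
have -> : \sum_(i < n) \sum_(k < n) christoffel G i i k x * (grad G psi k x / N x)
    = \sum_(i < n) - (phi x / N x
                      * \sum_(k < n) eps k * (pd k phi x * pd k psi x)).
  apply: eq_bigr => i _; rewrite mulr_sumr -sumrN; apply: eq_bigr => k _.
  rewrite christoffel_conf_metric // conf_christoffel_id //.
  by rewrite grad_conf_metric // /dlog; field; rewrite ?phix0 ?Nx0.
rewrite sumrB big_split /= -!mulr_sumr sumr_const_ord.
by field; rewrite ?Nx0.
Qed.

Lemma laplacian_equationE x : Om x ->
  laplacian G N x = Chat2 R n * grad_sq G psi x / N x <->
  \sum_(k < n) eps k *
    (phi x * N x * pd k (pd k N) x - (n%:R - 2) * N x * pd k phi x * pd k N x
     - Chat2 R n * phi x * (pd k psi x) ^+ 2) = 0.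
Proof.
move=> Omx; have phix0 := phi_neq0 Omx; have Nx0 := N_neq0 Omx.
apply: (eq_iff_factor_eq0 (c := phi x / N x)); first by rewrite mulf_neq0 ?invr_eq0.
rewrite (eq_bigr (fun k => phi x * N x * (eps k * pd k (pd k N) x)
    - (n%:R - 2) * N x * (eps k * (pd k phi x * pd k N x))
    - Chat2 R n * phi x * (eps k * pd k psi x ^+ 2))); last by move=> k _; ring.
rewrite !sumrB -!mulr_sumr laplacian_conf_metric // grad_sq_conf_metric //.
by rewrite [@pd _ _]lock; field; rewrite ?Nx0.
Qed.

Lemma divergence_equationE x : Om x ->
  divergence G (fun k y => grad G psi k y / N y) x = 0 <->
  \sum_(k < n) eps k *
    (N x * phi x * pd k (pd k psi) x - (n%:R - 2) * N x * pd k phi x * pd k psi x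
     - phi x * pd k psi x * pd k N x) = 0.
Proof.
move=> Omx; have phix0 := phi_neq0 Omx; have Nx0 := N_neq0 Omx.
apply: (eq_iff_factor_eq0 (c := phi x / N x ^+ 2)).
  by rewrite mulf_neq0 ?invr_eq0 ?expf_neq0.
rewrite (eq_bigr (fun k => N x * phi x * (eps k * pd k (pd k psi) x)
    - (n%:R - 2) * N x * (eps k * (pd k phi x * pd k psi x))
    - phi x * (eps k * (pd k psi x * pd k N x)))); last by move=> k _; ring.
by rewrite !sumrB -!mulr_sumr subr0 divergence_conf_metric.
Qed.

Lemma ricci_offdiag_equationE x i j : Om x -> i != j ->
  N x * ricci G i j x = hessian G N i j x - 2 * (pd i psi x * pd j psi x) / N x
    + 2 / ((n%:R - 1) * N x) * grad_sq G psi x * G x i j <->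
  (n%:R - 2) * N x * pd i (pd j phi) x - phi x * pd i (pd j N) x
    - pd i phi x * pd j N x - pd j phi x * pd i N x
    + 2 * (phi x / N x) * pd i psi x * pd j psi x = 0.
Proof.
move=> Omx ij; have phix0 := phi_neq0 Omx; have Nx0 := N_neq0 Omx.
apply: (eq_iff_factor_eq0 (c := (phi x)^-1)); first by rewrite invr_eq0.
have [dij _] := kdelta_neq (R := R) ij.
rewrite ricci_conf_metric // hessian_conf_metric // conf_metricE dij /dlog.
(* As an atom, [2 / ((n - 1) N)] spares [field] the side condition [n != 1]. *)
move: (2 / ((n%:R - 1) * N x)) => c.
by rewrite [@pd _ _]lock; field; rewrite ?phix0 ?Nx0.
Qed.

Lemma ricci_diag_equationE x i : Om x ->
  N x * ricci G i i x = hessian G N i i x - 2 * (pd i psi x * pd i psi x) / N x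
    + 2 / ((n%:R - 1) * N x) * grad_sq G psi x * G x i i <->
  phi x * ((n%:R - 2) * N x * pd i (pd i phi) x
      - phi x * pd i (pd i N) x - 2 * pd i phi x * pd i N x
      + 2 * (phi x / N x) * (pd i psi x) ^+ 2)
    + eps i * \sum_(k < n) eps k *
      (phi x * pd k (pd k phi) x * N x + phi x * pd k phi x * pd k N x
       - (n%:R - 1) * N x * (pd k phi x) ^+ 2
       - 2 / ((n%:R - 1) * N x) * phi x ^+ 2 * (pd k psi x) ^+ 2) = 0.
Proof.
move=> Omx; have phix0 := phi_neq0 Omx; have Nx0 := N_neq0 Omx.
apply: (eq_iff_factor_eq0 (c := (phi x ^+ 2)^-1)); first by rewrite invr_eq0 expf_neq0.
rewrite (eq_bigr (fun k => phi x * N x * (eps k * pd k (pd k phi) x)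
    + phi x * (eps k * (pd k phi x * pd k N x))
    - (n%:R - 1) * N x * (eps k * pd k phi x ^+ 2)
    - 2 / ((n%:R - 1) * N x) * phi x ^+ 2 * (eps k * pd k psi x ^+ 2)));
  last by move=> k _; ring.
rewrite !sumrB big_split /= -!mulr_sumr.
rewrite ricci_conf_metric // hessian_conf_metric // grad_sq_conf_metric //.
rewrite conf_metricE kdelta_id /dlog.
move: (2 / ((n%:R - 1) * N x)) => c.
by rewrite [@pd _ _]lock; field; rewrite ?phix0 ?Nx0.
Qed.

End ConformalMetric.

Theorem theorem1p1 (R : realType) (n : nat) (hn : (3 <= n)%N)
  (eps : 'I_n -> R) (heps : forall i, eps i = 1 \/ eps i = -1)
  (Om : set 'rV[R]_n) (hOm : open Om)
  (phi N psi : 'rV[R]_n -> R)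
  (sphi : smooth_on Om phi) (sN : smooth_on Om N) (spsi : smooth_on Om psi)
  (phi_pos : forall x, Om x -> 0 < phi x)
  (N_pos : forall x, Om x -> 0 < N x) :
  electrostatic Om (conf_metric eps phi) N psi <->
  (forall x, Om x ->
    [/\ (forall i j : 'I_n, i != j ->
          (n%:R - 2) * N x * pd i (pd j phi) x - phi x * pd i (pd j N) x
          - pd i phi x * pd j N x - pd j phi x * pd i N x
          + 2 * (phi x / N x) * pd i psi x * pd j psi x = 0),
        (forall i : 'I_n,
          phi x * ((n%:R - 2) * N x * pd i (pd i phi) x
                   - phi x * pd i (pd i N) x
                   - 2 * pd i phi x * pd i N x
                   + 2 * (phi x / N x) * (pd i psi x) ^+ 2)
          + eps i * \sum_(k < n) eps k *
              (phi x * pd k (pd k phi) x * N x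
               + phi x * pd k phi x * pd k N x
               - (n%:R - 1) * N x * (pd k phi x) ^+ 2
               - 2 / ((n%:R - 1) * N x) * phi x ^+ 2 * (pd k psi x) ^+ 2)
          = 0),
        \sum_(k < n) eps k *
           (N x * phi x * pd k (pd k psi) x
            - (n%:R - 2) * N x * pd k phi x * pd k psi x
            - phi x * pd k psi x * pd k N x) = 0 &
        \sum_(k < n) eps k *
           (phi x * N x * pd k (pd k N) x
            - (n%:R - 2) * N x * pd k phi x * pd k N x
            - Chat2 R n * phi x * (pd k psi x) ^+ 2) = 0]).
Proof.
have lapE := laplacian_equationE heps psi sphi phi_pos N_pos.
have divE := divergence_equationE heps hOm sphi sN spsi phi_pos N_pos.
have offE := ricci_offdiag_equationE heps psi hOm sphi phi_pos N_pos.
have diagE := ricci_diag_equationE heps psi hOm sphi phi_pos N_pos.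
split=> [ES x Omx | EQ x Omx].
- have [lap div ricci] := ES x Omx; split.
  + by move=> i j ij; exact: (offE _ _ _ Omx ij).1 (ricci i j).
  + by move=> i; exact: (diagE _ _ Omx).1 (ricci i i).
  + exact: (divE _ Omx).1 div.
  + exact: (lapE _ Omx).1 lap.
- have [off diag div lap] := EQ x Omx; split.
  + exact: (lapE _ Omx).2 lap.
  + exact: (divE _ Omx).2 div.
  + move=> i j; have [<-|ij] := eqVneq i j.
      exact: (diagE _ _ Omx).2 (diag i).
    exact: (offE _ _ _ Omx ij).2 (off i j ij).
Qed.
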